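(* Let $\overline{\mathbb{R}}=\mathbb{R}\cup\{-\infty\}$, and let $A\in\overline{\mathbb{R}}^{n\times m}$, $B\in\overline{\mathbb{R}}^{n\times k}$, $C\in\overline{\mathbb{R}}^{k\times m}$. Let $N=\max_{i\in[n],\,j\in[m]}\max\bigl\{A_{ij},\ \max_{1\le d\le k}\{B_{id}+C_{dj}\}\bigr\}$ and $M=\exp\{N\}$. If $\|A-B\otimes C\|_F^2\le\lambda$, then $\|\exp\{A\}-\exp\{B\}\boxtimes\exp\{C\}\|_F^2\le M^2\lambda$.
   Context: The tropical (max-plus) product of $B\in\overline{\mathbb{R}}^{n\times k}$ and $C\in\overline{\mathbb{R}}^{k\times m}$ is $(B\otimes C)_{ij}=\max_{s=1}^{k}\{B_{is}+C_{sj}\}$. The max-times (subtropical) product of nonnegative matrices $X\in[0,\infty)^{n\times k}$, $Y\in[0,\infty)^{k\times m}$ is $(X\boxtimes Y)_{ij}=\max_{s=1}^k X_{is}Y_{sj}$. $\exp\{\cdot\}$ applied to a matrix acts entrywise, with the convention $\exp(-\infty)=0$. $\|\cdot\|_F$ is the Frobenius norm and $[n]=\{1,\dots,n\}$. *)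

From mathcomp Require Import all_boot all_order all_algebra.
From mathcomp Require Import all_classical all_reals.
From mathcomp Require Import constructive_ereal ereal.
From mathcomp Require Import sequences exp.
Set Implicit Arguments. Unset Strict Implicit. Unset Printing Implicit Defensive.
Import Order.TTheory GRing.Theory Num.Theory.
Local Open Scope ring_scope.

(* Rbar = R ∪ {-∞}: [Some x] is the real x, [None] is -∞. *)
Definition rbar (R : realType) := option R.

Section Defs.
Variable R : realType.

Definition rbar_max (a b : rbar R) : rbar R :=
  match a, b with
  | None, _ => b
  | _, None => a
  | Some x, Some y => Some (Num.max x y)
  end.

Definition rbar_add (a b : rbar R) : rbar R :=
  match a, b with
  | Some x, Some y => Some (x + y)
  | _, _ => None
  end.

Definition rbar_exp (a : rbar R) : R :=
  match a with Some x => expR x | None => 0 end.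

Definition tropical_mul n k m (B : 'M[rbar R]_(n, k)) (C : 'M[rbar R]_(k, m))
  : 'M[rbar R]_(n, m) :=
  \matrix_(i, j) \big[rbar_max/None]_(s < k) rbar_add (B i s) (C s j).

(* max-times (subtropical) product of nonnegative matrices
   (max with neutral 0 is the ordinary max since entries are >= 0) *)
Definition maxtimes_mul n k m (X : 'M[R]_(n, k)) (Y : 'M[R]_(k, m)) : 'M[R]_(n, m) :=
  \matrix_(i, j) \big[Num.max/0]_(s < k) (X i s * Y s j).

Definition mexp n m (A : 'M[rbar R]_(n, m)) : 'M[R]_(n, m) := map_mx rbar_exp A.

Definition rbar_sqdiff (a b : rbar R) : \bar R :=
  match a, b with
  | Some x, Some y => ((x - y) ^+ 2)%:E
  | None, None => 0%E
  | _, _ => +oo%E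
  end.

Definition frob_sq_diff_rbar n m (A B : 'M[rbar R]_(n, m)) : \bar R :=
  (\sum_(i < n) \sum_(j < m) rbar_sqdiff (A i j) (B i j))%E.

Definition frob_sq n m (X : 'M[R]_(n, m)) : R :=
  \sum_(i < n) \sum_(j < m) X i j ^+ 2.

Definition bigN n k m (A : 'M[rbar R]_(n, m)) (B : 'M[rbar R]_(n, k))
  (C : 'M[rbar R]_(k, m)) : rbar R :=
  \big[rbar_max/None]_(i < n) \big[rbar_max/None]_(j < m)
     rbar_max (A i j) (tropical_mul B C i j).

End Defs.

From mathcomp Require Import all_boot all_order all_algebra.
From mathcomp Require Import all_classical all_reals.
From mathcomp Require Import constructive_ereal ereal.
From mathcomp Require Import sequences exp.
From mathcomp Require Import lra.
Set Implicit Arguments. Unset Strict Implicit. Unset Printing Implicit Defensive.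
Import Order.TTheory GRing.Theory Num.Theory.
Local Open Scope ring_scope.

(* Since exp is increasing and turns + into *, it maps the tropical product
   to the max-times product, so every entry of the error matrix has the form
   exp a - exp b with a, b <= N.  On (-oo, N] the exponential is
   M-Lipschitz, hence each squared entry is at most M^2 times the squared
   tropical error of that entry; summing gives the bound.  Entries where
   exactly one of a, b is -oo have infinite tropical error, so comparing
   entrywise in the extended reals covers them without case analysis on the
   hypothesis. *)

Section ExpLipschitz.
Variable R : realType.

Lemma expRB_le_mul (x y : R) : expR x - expR y <= expR x * (x - y).
Proof.
have := expR_ge1Dx (y - x); have := expR_gt0 x.
have -> : expR y = expR (y - x) * expR x by rewrite -expRD subrK.
nra.
Qed.

Lemma sqr_expRB_le (x y M : R) : expR x <= M -> expR y <= M ->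
  (expR x - expR y) ^+ 2 <= M ^+ 2 * (x - y) ^+ 2.
Proof.
wlog le_yx : x y / y <= x.
  move=> W hx hy; have [le_yx|/ltW le_xy] := leP y x; first exact: W.
  by rewrite -(sqrrN (expR x - _)) -(sqrrN (x - _)) !opprB; apply: W.
move=> hx _; rewrite -exprMn ler_sqr ?nnegrE ?subr_ge0 ?ler_expR //.
  apply: le_trans (expRB_le_mul x y) _.
  by rewrite ler_wpM2r ?subr_ge0.
by rewrite mulr_ge0 ?subr_ge0 // (le_trans _ hx) // ltW // expR_gt0.
Qed.

End ExpLipschitz.

Section ExtendedExp.
Variable R : realType.
Implicit Types a b : rbar R.

Lemma rbar_exp_max a b :
  rbar_exp (rbar_max a b) = Num.max (rbar_exp a) (rbar_exp b).
Proof.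
case: a b => [x|] [y|] //=; last by rewrite maxxx.
- have [le_xy|/ltW le_yx] := leP x y; first by rewrite !max_r ?ler_expR.
  by rewrite !max_l ?ler_expR.
- by rewrite max_l // ltW // expR_gt0.
- by rewrite max_r // ltW // expR_gt0.
Qed.

Lemma rbar_exp_add a b : rbar_exp (rbar_add a b) = rbar_exp a * rbar_exp b.
Proof. by case: a b => [x|] [y|] //=; rewrite ?expRD ?mul0r ?mulr0. Qed.

Lemma rbar_exp_bigmax (I : Type) (r : seq I) (P : pred I) (F : I -> rbar R) :
  rbar_exp (\big[@rbar_max R/None]_(i <- r | P i) F i)
  = \big[Num.max/0]_(i <- r | P i) rbar_exp (F i).
Proof. exact: (big_morph _ rbar_exp_max). Qed.

Lemma mexp_tropical_mul n k m (B : 'M[rbar R]_(n, k)) (C : 'M[rbar R]_(k, m)) :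
  mexp (tropical_mul B C) = maxtimes_mul (mexp B) (mexp C).
Proof.
apply/matrixP => i j; rewrite !mxE rbar_exp_bigmax.
by apply: eq_bigr => s _; rewrite !mxE rbar_exp_add.
Qed.

Lemma rbar_exp_le_bigN n k m (A : 'M[rbar R]_(n, m)) (B : 'M[rbar R]_(n, k))
    (C : 'M[rbar R]_(k, m)) i j :
  Num.max (rbar_exp (A i j)) (rbar_exp (tropical_mul B C i j))
  <= rbar_exp (bigN A B C).
Proof.
rewrite /bigN rbar_exp_bigmax (le_trans _ (le_bigmax _ _ i)) //.
by rewrite rbar_exp_bigmax -rbar_exp_max (le_bigmax _ (fun j => _) j).
Qed.

Lemma rbar_sqdiff_ge0 a b : (0 <= rbar_sqdiff a b)%E.
Proof. by case: a b => [x|] [y|] //=; rewrite lee_fin sqr_ge0. Qed.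

Lemma sqr_rbar_expB_le a b (M : R) : rbar_exp a <= M -> rbar_exp b <= M ->
  (((rbar_exp a - rbar_exp b) ^+ 2)%:E <= (M ^+ 2)%:E * rbar_sqdiff a b)%E.
Proof.
have M2_gt0 x : expR x <= M -> (0 < (M ^+ 2)%:E)%E.
  by move=> hx; rewrite lte_fin exprn_gt0 // (lt_le_trans (expR_gt0 x)).
case: a b => [x|] [y|] /= ha hb.
- by rewrite -EFinM lee_fin sqr_expRB_le.
- by rewrite muleC gt0_mulye ?leey ?(M2_gt0 x).
- by rewrite muleC gt0_mulye ?leey ?(M2_gt0 y).
- by rewrite subrr expr0n mule0.
Qed.

End ExtendedExp.

Theorem theorem4 (R : realType) (n m k : nat)
  (A : 'M[rbar R]_(n, m)) (B : 'M[rbar R]_(n, k)) (C : 'M[rbar R]_(k, m))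
  (lambda : R) :
  (frob_sq_diff_rbar A (tropical_mul B C) <= lambda%:E)%E ->
  frob_sq (mexp A - maxtimes_mul (mexp B) (mexp C))
    <= (rbar_exp (bigN A B C)) ^+ 2 * lambda.
Proof.
rewrite -mexp_tropical_mul; have le_N := rbar_exp_le_bigN A B C.
move: (rbar_exp (bigN A B C)) (tropical_mul B C) le_N => M T le_N le_lambda.
rewrite -lee_fin EFinM; apply: le_trans (lee_wpmul2l _ le_lambda); last first.
  by rewrite lee_fin sqr_ge0.
rewrite /frob_sq -sumEFin /frob_sq_diff_rbar ge0_sume_distrr; last first.
  by move=> i _; apply: sume_ge0 => j _; apply: rbar_sqdiff_ge0.
apply: lee_sum => i _; rewrite -sumEFin ge0_sume_distrr; last first.
  by move=> j _; apply: rbar_sqdiff_ge0.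
apply: lee_sum => j _; rewrite !mxE.
have := le_N i j; rewrite ge_max => /andP[hA hT].
exact: sqr_rbar_expB_le hA hT.
Qed.
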